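(* Let $d,r$ be integers with $d\ge1$ and $1\le r\le\binom{m+d}{d}-r_d$. Then $d_r(\mathrm{PRM}_q(d,m))=\mathsf{p}_m-\overline{e}_r(d,m)$.
   Context: $q$ is a prime power, $\mathbb{F}_q$ the finite field with $q$ elements, $m$ a positive integer, $\mathsf{p}_m=q^m+\dots+q+1=|\mathbb{P}^m(\mathbb{F}_q)|$. A monomial $\mu\neq1$ in $x_0,\dots,x_m$ written $x_0^{a_0}\cdots x_k^{a_k}$ with $a_k>0$ is projectively reduced if $a_0,\dots,a_{k-1}\le q-1$; $1$ is projectively reduced; a polynomial is projectively reduced if it is a linear combination of projectively reduced monomials. $r_d$ is the dimension of the degree-$d$ component of the ideal generated by $\{x_i^qx_j-x_ix_j^q:0\le i<j\le m\}$; $\binom{m+d}{d}-r_d=\dim\mathrm{PRM}_q(d,m)$. $\overline{e}_r(d,m)$ is the maximum number of points of $\mathbb{P}^m(\mathbb{F}_q)$ at which $G_1,\dots,G_r$ all vanish, over families of $r$ linearly independent projectively reduced homogeneous polynomials of degree $d$. Fix representatives $P_1,\dots,P_{\mathsf{p}_m}\in\mathbb{F}_q^{m+1}$ of the points of $\mathbb{P}^m(\mathbb{F}_q)$; $\mathrm{PRM}_q(d,m)$ is the image of the homogeneous degree-$d$ polynomials under $F\mapsto(F(P_1),\dots,F(P_{\mathsf{p}_m}))$. For a linear code $C$ and $1\le r\le\dim C$, $d_r(C)=\min\{|\mathrm{Supp}(D)|:D\subseteq C\text{ subspace},\dim D=r\}$, with $\mathrm{Supp}(D)$ the set of coordinates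 where some element of $D$ is nonzero. *)

From HB Require Import structures.
From mathcomp Require Import all_boot all_order all_algebra all_field.
From mathcomp Require Import mpoly.
From Stdlib Require Import ClassicalEpsilon.
Set Implicit Arguments.
Unset Strict Implicit.
Unset Printing Implicit Defensive.
Import GRing.Theory.
Local Open Scope ring_scope.

Definition classb (P : Prop) : bool :=
  if excluded_middle_informative P then true else false.

Section PRM.
Variable F : finFieldType.
Variable m : nat.

Definition qF : nat := #|F|.
Definition pm : nat := (\sum_(i < m.+1) qF ^ i)%N.

Notation poly := {mpoly F[m.+1]}.

Definition proj_reduced_mon (mu : 'X_{1..m.+1}) : bool :=
  (mu == 0%MM) ||
  [exists k : 'I_m.+1,
     [&& (0 < mu k)%N,
         [forall j : 'I_m.+1, (k < j)%N ==> (mu j == 0%N)] &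
         [forall j : 'I_m.+1, (j < k)%N ==> (mu j <= qF - 1)%N]]].

Definition proj_reduced (f : poly) : bool :=
  all proj_reduced_mon (msupp f).

Definition lin_indep k (G : 'I_k -> poly) : Prop :=
  forall c : 'I_k -> F, \sum_(i < k) c i *: G i = 0 -> forall i, c i = 0.

Definition gen_poly (i j : 'I_m.+1) : poly :=
  'X_i ^+ qF * 'X_j - 'X_i * 'X_j ^+ qF.

Definition in_ideal (f : poly) : Prop :=
  exists h : 'I_m.+1 -> 'I_m.+1 -> poly,
    f = \sum_(i < m.+1) \sum_(j < m.+1 | (i < j)%N) h i j * gen_poly i j.

(* r_d : dimension of the degree-d component of that ideal, i.e. the
   maximal number of linearly independent homogeneous degree-d polynomials
   in the ideal (bounded by binom(m+d,d), the dimension of all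
   homogeneous polynomials of degree d). *)
Definition rd (d : nat) : nat :=
  \max_(k < 'C(m + d, d).+1 |
         classb (exists G : 'I_k -> poly,
                   (forall i, G i \is d.-homog /\ in_ideal (G i)) /\
                   lin_indep G)) k.

(* Points of P^m(F_q), represented canonically by the vectors whose last
   nonzero coordinate equals 1. *)
Definition normalized (v : 'rV[F]_m.+1) : bool :=
  [exists k : 'I_m.+1,
     (v 0 k == 1) && [forall j : 'I_m.+1, (k < j)%N ==> (v 0 j == 0)]].

Definition ev (f : poly) (v : 'rV[F]_m.+1) : F := f.@[fun i => v 0 i].

Definition n_common_zeros k (G : 'I_k -> poly) : nat :=
  #|[set v : 'rV[F]_m.+1 | normalized v && [forall i, ev (G i) v == 0]]|.

Definition ebar (d r : nat) : nat :=
  \max_(k < pm.+1 |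
         classb (exists G : 'I_r -> poly,
                   [/\ forall i, G i \is d.-homog,
                       forall i, proj_reduced (G i),
                       lin_indep G &
                       n_common_zeros G = k])) k.

Definition is_proj_reps (P : 'I_pm -> 'rV[F]_m.+1) : Prop :=
  (forall i, P i != 0) /\
  (forall v : 'rV[F]_m.+1, v != 0 -> exists i, exists c : F, v = c *: P i) /\
  (forall i j (c : F), P i = c *: P j -> i = j).

Definition PRM (P : 'I_pm -> 'rV[F]_m.+1) (d : nat) (x : 'rV[F]_pm) : Prop :=
  exists f : poly, f \is d.-homog /\ x = \row_i ev f (P i).

End PRM.

Definition supp (F : finFieldType) n (D : {vspace 'rV[F]_n}) : {set 'I_n} :=
  [set j : 'I_n | [exists x : 'rV[F]_n, (x \in D) && (x 0 j != 0)]].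

(* r-th generalized Hamming weight of a linear code C <= F^n (C given by its
   membership predicate): the minimum of |Supp(D)| over subspaces D of C of
   dimension r (every such support size is <= n, hence in 'I_n.+1). *)
Definition ghw (F : finFieldType) n (C : 'rV[F]_n -> Prop) (r : nat) : nat :=
  \big[minn/n]_(k < n.+1 |
       classb (exists D : {vspace 'rV[F]_n},
                 [/\ (forall x, x \in D -> C x), \dim D = r & #|supp D| = k]))
    (k : nat).

(* Since x^q = x on F_q, every exponent a > 0 of x_0, ..., x_{k-1} in a monomial
   with last variable x_k can be lowered into [1, q - 1] by multiples of q - 1;
   adding the removed degree to x_k keeps the monomial homogeneous of the same
   degree and its values on F^{m+1} unchanged, and makes it projectively reduced.
   Conversely, for d >= 1 a projectively reduced form vanishing on F^{m+1} is 0: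
   inducting on the last variable x_k, evaluating at (x_0, ..., x_{k-1}, 1, 0, ..., 0)
   leaves a polynomial in x_0, ..., x_{k-1} with exponents < q, and such a
   polynomial vanishing on all of F^k is 0.  So evaluation at P_1, ..., P_{p_m} is a
   bijection from projectively reduced forms of degree d onto PRM_q(d,m), and an
   r-dimensional subcode is the span of the codewords of r independent reduced
   forms G_1, ..., G_r; its support is the complement of their common zeros. *)

From HB Require Import structures.
From mathcomp Require Import all_boot all_order all_algebra all_field.
From mathcomp Require Import mpoly.
From Stdlib Require Import ClassicalEpsilon.
Set Implicit Arguments.
Unset Strict Implicit.
Unset Printing Implicit Defensive.
Import GRing.Theory.
Local Open Scope ring_scope.

Section MPolyCoeff.
Variables (R : nzRingType) (n : nat).
Implicit Types (p : {mpoly R[n]}) (s : seq 'X_{1..n}) (P : pred 'X_{1..n}).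

Lemma mpoly_eq0_msupp p : (forall mu, mu \in msupp p -> p@_mu = 0) -> p = 0.
Proof.
move=> p_msupp; apply/mpolyP => mu; rewrite mcoeff0.
by case: (boolP (mu \in msupp p)) => [/p_msupp | /memN_msupp_eq0].
Qed.

Lemma msupp_sumX s P (c : 'X_{1..n} -> R) (t : 'X_{1..n} -> 'X_{1..n}) nu :
  nu \in msupp (\sum_(mu <- s | P mu) c mu *: 'X_[t mu]) ->
  exists2 mu, (mu \in s) && P mu & nu = t mu.
Proof.
move=> /msupp_sum_le /flattenP [l /mapP [mu]].
rewrite mem_filter => /andP[P_mu s_mu] -> /msuppZ_le.
by rewrite msuppX inE => /eqP ->; exists mu; rewrite ?s_mu ?P_mu.
Qed.

Lemma mcoeff_sumX_inj s P (c : 'X_{1..n} -> R) (t : 'X_{1..n} -> 'X_{1..n}) mu0 :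
  uniq s -> mu0 \in s -> P mu0 ->
  (forall mu, mu \in s -> P mu -> t mu = t mu0 -> mu = mu0) ->
  (\sum_(mu <- s | P mu) c mu *: 'X_[t mu])@_(t mu0) = c mu0.
Proof.
move=> s_uniq s_mu0 P_mu0 t_inj.
rewrite raddf_sum big_mkcond (bigD1_seq mu0) //= P_mu0 mcoeffZ mcoeffX eqxx mulr1.
rewrite big1_seq ?addr0 // => mu /andP[ne_mu s_mu]; case: ifP => // P_mu.
rewrite mcoeffZ mcoeffX; case: eqP => [/(t_inj _ s_mu P_mu) e_mu|]; last by rewrite mulr0.
by rewrite e_mu eqxx in ne_mu.
Qed.

End MPolyCoeff.

Section LowExponents.
Variables (F : finFieldType) (n : nat).
Local Notation q := #|F|.
Implicit Types (p : {mpoly F[n]}) (mu : 'X_{1..n}) (x : 'I_n -> F).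

Lemma vanishing_poly_eq0 (Q : {poly F}) :
  (size Q <= q)%N -> (forall t, Q.[t] = 0) -> Q = 0.
Proof.
move=> sizeQ Q0; apply/eqP; apply: contraT => /max_poly_roots roots_lt.
have /roots_lt/(_ (enum_uniq F)) : all (root Q) (enum F).
  by apply/allP => t _; rewrite /root Q0.
by rewrite -cardE ltnNge sizeQ.
Qed.

Definition mdrop (k : 'I_n) mu : 'X_{1..n} :=
  [multinom (if i == k then 0%N else mu i) | i < n].

Lemma prodX_set x k t mu :
  \prod_i (if i == k then t else x i) ^+ mu i =
  t ^+ mu k * \prod_i x i ^+ mdrop k mu i.
Proof.
rewrite (bigD1 k) //= eqxx [X in _ = _ * X](bigD1 k) //= mnmE eqxx mul1r.
by congr (_ * _); apply: eq_bigr => i /negbTE ne_ik; rewrite mnmE ne_ik.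
Qed.

Definition mslice (k : 'I_n) (e : nat) p : {mpoly F[n]} :=
  \sum_(mu <- msupp p | mu k == e) p@_mu *: 'X_[mdrop k mu].

(* [mslice k e p] is the coefficient of [x_k ^ e] in [p] viewed as a polynomial
   in [x_k]; that polynomial has degree < q and vanishes on [F]. *)
Lemma vanishing_mslice k e p :
  (forall mu, mu \in msupp p -> forall i, mu i < q)%N ->
  (forall x, p.@[x] = 0) -> forall x, (mslice k e p).@[x] = 0.
Proof.
move=> lt_q p0 x.
pose Q : {poly F} :=
  \sum_(mu <- msupp p) (p@_mu * \prod_i x i ^+ mdrop k mu i) *: 'X^(mu k).
have Q0 : Q = 0.
  apply: vanishing_poly_eq0 => [|t].
    apply: (leq_trans (size_sum _ _ _)); apply/bigmax_leqP_seq => mu s_mu _.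
    by rewrite (leq_trans (size_scale_leq _ _)) // size_polyXn lt_q.
  rewrite -(p0 (fun i => if i == k then t else x i)) horner_sum mevalE.
  apply: eq_bigr => mu _.
  by rewrite hornerZ hornerXn prodX_set -mulrA [_ * t ^+ _]mulrC.
have : Q`_e = 0 by rewrite Q0 coef0.
rewrite coef_sumMXn => <-; rewrite raddf_sum /=.
by apply: eq_bigr => mu _; rewrite mevalZ mevalX.
Qed.

Lemma vanishing_first_vars_eq0 (k : nat) p :
  (forall mu, mu \in msupp p -> forall i, mu i < q)%N ->
  (forall mu, mu \in msupp p -> forall i : 'I_n, k <= i -> mu i = 0)%N ->
  (forall x, p.@[x] = 0) -> p = 0.
Proof.
elim: k p => [|k IH] p lt_q vars_k p0.
  have msupp0 mu : mu \in msupp p -> mu = 0%MM.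
    by move=> s_mu; apply/mnmP => i; rewrite mnm0E (vars_k _ s_mu).
  apply: mpoly_eq0_msupp => mu s_mu; rewrite -(p0 (fun=> 0)) mevalE.
  rewrite (bigD1_seq mu) ?msupp_uniq //= [X in _ + X]big1_seq ?addr0; last first.
    move=> nu /andP[ne_nu s_nu].
    by rewrite (msupp0 _ s_nu) (msupp0 _ s_mu) eqxx in ne_nu.
  by rewrite (msupp0 _ s_mu) big1 ?mulr1 // => i _; rewrite mnm0E.
have [lt_kn|le_nk] := ltnP k n; last first.
  apply: IH p0 => // mu s_mu i le_ki.
  by have := leq_trans le_nk le_ki; rewrite leqNgt ltn_ord.
pose kk : 'I_n := Ordinal lt_kn.
have mslice0 e : mslice kk e p = 0.
  apply: IH; last exact: vanishing_mslice.
    move=> nu /msupp_sumX [mu /andP[s_mu _] ->] i; rewrite mnmE.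
    by case: eqP => _; [apply: leq_ltn_trans (lt_q _ s_mu kk) | apply: lt_q].
  move=> nu /msupp_sumX [mu /andP[s_mu _] ->] i le_ki; rewrite mnmE.
  case: eqP => // /eqP ne_ik; apply: vars_k => //.
  by rewrite ltn_neqAle le_ki andbT; apply: contra ne_ik => /eqP e_ik; apply/eqP/val_inj.
apply: mpoly_eq0_msupp => mu s_mu.
have := congr1 (mcoeff (mdrop kk mu)) (mslice0 (mu kk)).
rewrite mcoeff0 (@mcoeff_sumX_inj _ _ _ (fun nu => nu kk == mu kk) (fun nu => p@_nu)
                  (mdrop kk) _ (msupp_uniq p) s_mu (eqxx _)) //.
move=> nu _ /eqP e_k e_drop; apply/mnmP => i; case: (eqVneq i kk) => [-> // | ne_ik].
by have := congr1 (fun nu : 'X_{1..n} => nu i) e_drop; rewrite !mnmE (negbTE ne_ik).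
Qed.

Lemma vanishing_low_exp_eq0 p :
  (forall mu, mu \in msupp p -> forall i, mu i < q)%N ->
  (forall x, p.@[x] = 0) -> p = 0.
Proof.
move=> lt_q; apply: (vanishing_first_vars_eq0 (k := n)) => // mu _ i.
by rewrite leqNgt ltn_ord.
Qed.

End LowExponents.

Lemma meval_homogZ (R : comNzRingType) n (p : {mpoly R[n]}) d c (x : 'I_n -> R) :
  p \is d.-homog -> p.@[fun i => c * x i] = c ^+ d * p.@[x].
Proof.
move=> /dhomogP p_homog; rewrite !mevalE mulr_sumr; apply: eq_big_seq => mu s_mu.
under eq_bigr do rewrite exprMn.
rewrite big_split /= prodrXr -(p_homog _ s_mu) mulrCA.
by congr (_ ^+ _ * _); apply: esym (mdegE mu).
Qed.

Section ExponentReduction.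
Variable F : finFieldType.
Local Notation q := #|F|.

Definition exp_red (a : nat) : nat := if a is a'.+1 then (a' %% q.-1).+1 else 0.

Lemma exp_red_decomp a : a = (exp_red a + a.-1 %/ q.-1 * q.-1)%N.
Proof. by case: a => [|a] /=; [rewrite div0n | rewrite addSn addnC -divn_eq]. Qed.

Lemma exp_red_le a : (exp_red a <= a)%N.
Proof. by rewrite {2}(exp_red_decomp a) leq_addr. Qed.

Lemma exp_red_le_pred_card a : (exp_red a <= q.-1)%N.
Proof.
case: a => [|a] //=; apply: ltn_pmod.
by have := card_finNzRing_gt1 F; case: (#|F|) => [|[|]].
Qed.

Lemma exp_red_eq0 a : (exp_red a == 0%N) = (a == 0%N).
Proof. by case: a. Qed.

Lemma expfD_mul_pred_card (x : F) b t :
  (0 < b)%N -> x ^+ (b + t * q.-1)%N = x ^+ b.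
Proof.
move=> b_gt0; elim: t => [|t IH]; first by rewrite mul0n addn0.
have expfD_pred_card c : (0 < c)%N -> x ^+ (c + q.-1)%N = x ^+ c.
  case: c => // c _; rewrite addSn -addnS prednK ?(ltnW (card_finNzRing_gt1 F)) //.
  by rewrite exprD expf_card exprS mulrC.
by rewrite mulSn addnCA addnC expfD_pred_card ?IH // ltn_addr.
Qed.

Lemma expf_red (x : F) a : x ^+ exp_red a = x ^+ a.
Proof.
case: (posnP a) => [-> // | a_gt0].
by rewrite {2}(exp_red_decomp a) expfD_mul_pred_card // lt0n exp_red_eq0 -lt0n.
Qed.

End ExponentReduction.

Section MonomialReduction.
Variables (F : finFieldType) (m : nat).
Local Notation n := m.+1.
Local Notation q := #|F|.
Implicit Types (mu : 'X_{1..n}) (x : 'I_n -> F).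

Definition mlast mu : nat := \max_(i < n | mu i != 0%N) (i : nat).

Lemma mlast_lt mu : (mlast mu < n)%N.
Proof. by rewrite ltnS; apply/bigmax_leqP => i _; rewrite -ltnS. Qed.

Definition mlast_ord mu : 'I_n := Ordinal (mlast_lt mu).

Lemma leq_mlast mu (i : 'I_n) : mu i != 0%N -> (i <= mlast mu)%N.
Proof. exact: (leq_bigmax_cond (F := fun i : 'I_n => (i : nat))). Qed.

Lemma mlast_max mu (i : 'I_n) : (mlast mu < i)%N -> mu i = 0%N.
Proof. by apply: contraTeq => /leq_mlast; rewrite -leqNgt. Qed.

Lemma mlast0 : mlast 0%MM = 0%N.
Proof. by apply: big_pred0 => i; rewrite mnm0E. Qed.

Lemma mlast_neq0 mu : mu != 0%MM -> mu (mlast_ord mu) != 0%N.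
Proof.
move=> mu_neq0; have : (0 < #|[pred i : 'I_n | mu i != 0%N]|)%N.
  apply/card_gt0P/existsP; apply: contraNT mu_neq0 => /existsPn mu0.
  by apply/eqP/mnmP => i; rewrite mnm0E; apply/eqP/negbNE/mu0.
move=> /(eq_bigmax_cond (fun i : 'I_n => (i : nat))) [i mu_i e_i].
by rewrite (_ : mlast_ord mu = i) //; apply: val_inj; rewrite /= /mlast e_i.
Qed.

Definition mexcess mu : nat :=
  \sum_(j < n | (j < mlast mu)%N) (mu j - exp_red F (mu j)).

Definition mred mu : 'X_{1..n} :=
  [multinom (if (i < mlast mu)%N then exp_red F (mu i)
             else if (i : nat) == mlast mu then (mu i + mexcess mu)%N
             else 0%N) | i < n].

Lemma mred0 : mred 0%MM = 0%MM.
Proof.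
apply/mnmP => i; rewrite mnmE mnm0E /mexcess mlast0 ltn0 big_pred0 //.
by case: ifP.
Qed.

Lemma mdeg_mred mu : mdeg (mred mu) = mdeg mu.
Proof.
pose L := mlast mu.
have mredE (i : 'I_n) :
  (mred mu i + (if (i < L)%N then mu i - exp_red F (mu i) else 0) =
   mu i + (if (i : nat) == L then mexcess mu else 0))%N.
  rewrite mnmE; case: ltnP => [lt_iL | le_Li].
    by rewrite (ltn_eqF lt_iL) addn0 subnKC // exp_red_le.
  case: eqP => [_ | /eqP ne_iL]; first by rewrite addn0.
  by rewrite !addn0 mlast_max // ltn_neqAle le_Li andbT eq_sym.
have S_low : mexcess mu =
    (\sum_(i < n) (if (i < L)%N then mu i - exp_red F (mu i) else 0))%N.
  by rewrite /mexcess big_mkcond.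
have S_last : mexcess mu = (\sum_(i < n) (if (i : nat) == L then mexcess mu else 0))%N.
  rewrite (bigD1 (mlast_ord mu)) //= eqxx big1 ?addn0 // => i ne_i.
  by case: eqP => // e_i; case/eqP: ne_i; apply: val_inj.
apply/eqP; rewrite !mdegE -(eqn_add2r (mexcess mu)) {1}S_low {1}S_last -!big_split /=.
by apply/eqP/eq_bigr => i _; apply: mredE.
Qed.

Lemma prod_mred x mu : \prod_i x i ^+ mred mu i = \prod_i x i ^+ mu i.
Proof.
have [-> | mu_neq0] := eqVneq mu 0%MM; first by rewrite mred0.
rewrite (bigD1 (mlast_ord mu)) //= [RHS](bigD1 (mlast_ord mu)) //=.
congr (_ * _); last first.
  apply: eq_bigr => i ne_i; rewrite mnmE; case: ltnP => [_ | le_Li].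
    by rewrite expf_red.
  have ne_iL : (i : nat) != mlast mu by apply: contra ne_i => /eqP e_i; apply/eqP/val_inj.
  by rewrite (negbTE ne_iL) mlast_max // ltn_neqAle le_Li andbT eq_sym.
rewrite mnmE /= ltnn eqxx.
have -> : mexcess mu = ((\sum_(j < n | (j < mlast mu)%N) (mu j).-1 %/ q.-1) * q.-1)%N.
  rewrite /mexcess big_distrl; apply: eq_bigr => j _.
  by rewrite {1}(exp_red_decomp F (mu j)) addKn.
by rewrite expfD_mul_pred_card // lt0n mlast_neq0.
Qed.

Lemma mred_proj_reduced mu : proj_reduced_mon F (mred mu).
Proof.
have [-> | mu_neq0] := eqVneq mu 0%MM; first by rewrite mred0 /proj_reduced_mon eqxx.
apply/orP; right; apply/existsP; exists (mlast_ord mu); apply/and3P; split.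
- by rewrite mnmE /= ltnn eqxx ltn_addr // lt0n mlast_neq0.
- apply/forallP => j; apply/implyP => lt_Lj.
  by rewrite mnmE /= ltnNge (ltnW lt_Lj) (gtn_eqF lt_Lj).
- apply/forallP => j; apply/implyP => lt_jL.
  by rewrite mnmE /= lt_jL /qF subn1 exp_red_le_pred_card.
Qed.

Definition mreduce (f : {mpoly F[n]}) : {mpoly F[n]} :=
  \sum_(mu <- msupp f) f@_mu *: 'X_[mred mu].

Lemma meval_mreduce f x : (mreduce f).@[x] = f.@[x].
Proof.
rewrite raddf_sum mevalE /=; apply: eq_bigr => mu _.
by rewrite mevalZ mevalX prod_mred.
Qed.

Lemma mreduce_homog f d : f \is d.-homog -> mreduce f \is d.-homog.
Proof.
move=> /dhomogP f_homog; rewrite /mreduce big_seq; apply: rpred_sum => mu s_mu.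
by rewrite rpredZ // dhomogX -(f_homog _ s_mu); apply/eqP/mdeg_mred.
Qed.

Lemma mreduce_proj_reduced f : proj_reduced (mreduce f).
Proof. by apply/allP => nu /msupp_sumX [mu _ ->]; apply: mred_proj_reduced. Qed.

Lemma proj_reduced_sum k (c : 'I_k -> F) (G : 'I_k -> {mpoly F[n]}) :
  (forall i, proj_reduced (G i)) -> proj_reduced (\sum_i c i *: G i).
Proof.
move=> G_red; apply/allP => mu /msupp_sum_le /flattenP [l /mapP [i _ ->]].
by move=> /msuppZ_le; apply/allP/G_red.
Qed.

End MonomialReduction.

Section VanishingReducedForms.
Variables (F : finFieldType) (m : nat).
Local Notation n := m.+1.
Local Notation q := #|F|.
Implicit Types (mu : 'X_{1..n}) (x : 'I_n -> F).

Lemma proj_reduced_mon_lt mu : proj_reduced_mon F mu -> mu != 0%MM ->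
  forall j : 'I_n, (j < mlast mu)%N -> (mu j < q)%N.
Proof.
case/orP => [/eqP -> | /existsP [k /and3P [mu_k /forallP above_k /forallP below_k]]].
  by rewrite eqxx.
move=> mu_neq0 j; have /implyP mu_j_le := below_k j.
have <- : k = mlast mu :> nat.
  apply/eqP; rewrite eqn_leq leq_mlast -?lt0n //= leqNgt; apply/negP => lt_kL.
  by have := above_k (mlast_ord mu); rewrite lt_kL (negbTE (mlast_neq0 mu_neq0)).
move=> /mu_j_le le_j; rewrite (leq_ltn_trans le_j) // /qF subn1 ltn_predL.
exact: ltnW (card_finNzRing_gt1 F).
Qed.

Definition mtrunc (k : nat) mu : 'X_{1..n} :=
  [multinom (if (i < k)%N then mu i else 0%N) | i < n].

Lemma mdeg_mtrunc mu : mdeg mu = (mdeg (mtrunc (mlast mu) mu) + mu (mlast_ord mu))%N.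
Proof.
rewrite !mdegE [in RHS](bigD1 (mlast_ord mu)) //= [in LHS](bigD1 (mlast_ord mu)) //=.
rewrite mnmE ltnn add0n addnC; congr (_ + _)%N; apply: eq_bigr => i ne_i.
rewrite mnmE; case: ltnP => // le_Li; apply: mlast_max.
by rewrite ltn_neqAle le_Li andbT; apply: contra ne_i => /eqP e_i; apply/eqP/val_inj.
Qed.

Lemma mtrunc_mlast_inj mu nu : mdeg mu = mdeg nu -> mlast mu = mlast nu ->
  mtrunc (mlast mu) mu = mtrunc (mlast nu) nu -> mu = nu.
Proof.
move=> e_deg e_last e_trunc.
have e_ord : mlast_ord mu = mlast_ord nu by apply: val_inj; rewrite /= e_last.
have e_top : mu (mlast_ord mu) = nu (mlast_ord nu).
  by apply/eqP; rewrite -(eqn_add2l (mdeg (mtrunc (mlast mu) mu))) {2}e_trunc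
                      -!mdeg_mtrunc e_deg.
apply/mnmP => i; case: (ltngtP i (mlast mu)) => [lt_iL | lt_Li | e_iL].
- by have := congr1 (fun nu : 'X_{1..n} => nu i) e_trunc; rewrite !mnmE -e_last lt_iL.
- by rewrite !mlast_max -?e_last.
- have -> : i = mlast_ord mu by apply: val_inj.
  by rewrite {2}e_ord.
Qed.

Definition slice_pt x (k : nat) : 'I_n -> F :=
  fun i => if (i < k)%N then x i else if (i : nat) == k then 1 else 0.

Lemma prod_slice_pt_last x mu :
  \prod_i slice_pt x (mlast mu) i ^+ mu i = \prod_i x i ^+ mtrunc (mlast mu) mu i.
Proof.
apply: eq_bigr => i _; rewrite mnmE /slice_pt; case: ltnP => // le_Li.
case: eqP => [_ | /eqP ne_iL]; first by rewrite expr1n expr0.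
by rewrite mlast_max // ltn_neqAle le_Li andbT eq_sym.
Qed.

Lemma prod_slice_pt_gt x k mu :
  (k < mlast mu)%N -> \prod_i slice_pt x k i ^+ mu i = 0.
Proof.
move=> lt_kL; have mu_neq0 : mu != 0%MM by apply: contraTneq lt_kL => ->; rewrite mlast0.
rewrite (bigD1 (mlast_ord mu)) //= /slice_pt ltnNge (ltnW lt_kL) (gtn_eqF lt_kL) /=.
by rewrite expr0n (negbTE (mlast_neq0 mu_neq0)) mul0r.
Qed.

Section Vanishing.
Variables (d : nat) (g : {mpoly F[n]}).
Hypotheses (d_gt0 : (0 < d)%N) (g_homog : g \is d.-homog) (g_red : proj_reduced g).
Hypothesis g0 : forall x, g.@[x] = 0.

Let msupp_neq0 mu : mu \in msupp g -> mu != 0%MM.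
Proof. by move=> s_mu; rewrite -mdeg_eq0 (dhomog_mf g_homog s_mu) -lt0n. Qed.

(* At [slice_pt x k], monomials whose last variable lies beyond [x_k] vanish and
   those ending before [x_k] have zero coefficient by induction, so [g] evaluates
   to the truncated part [h], whose exponents are all < q. *)
Lemma mcoeff_eq0_mlast k :
  (forall mu, mu \in msupp g -> (mlast mu < k)%N -> g@_mu = 0) ->
  forall mu, mu \in msupp g -> mlast mu = k -> g@_mu = 0.
Proof.
move=> coef_lt mu0 s_mu0 L_mu0.
pose h := \sum_(mu <- msupp g | mlast mu == k) g@_mu *: 'X_[mtrunc k mu].
have h0 : h = 0.
  apply: vanishing_low_exp_eq0 => [nu | x].
  - move=> /msupp_sumX [mu /andP[s_mu /eqP L_mu] ->] i; rewrite mnmE.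
    case: ifP => [lt_ik | _]; last exact: ltnW (card_finNzRing_gt1 F).
    by apply: proj_reduced_mon_lt; rewrite ?L_mu ?msupp_neq0 //; apply: (allP g_red).
  transitivity g.@[slice_pt x k]; last exact: g0.
  rewrite [RHS]mevalE (bigID (fun mu => mlast mu == k)) /=.
  rewrite [X in _ = _ + X]big_seq_cond [X in _ = _ + X]big1 ?addr0 => [|mu].
    rewrite raddf_sum /=; apply: eq_bigr => mu /eqP L_mu.
    by rewrite mevalZ mevalX -L_mu prod_slice_pt_last.
  case/andP=> s_mu ne_Lk; case: (ltngtP (mlast mu) k) => [lt_Lk | lt_kL | e_Lk].
  - by rewrite coef_lt ?mul0r.
  - by rewrite prod_slice_pt_gt ?mulr0.
  - by rewrite e_Lk eqxx in ne_Lk.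
have := congr1 (mcoeff (mtrunc k mu0)) h0.
rewrite mcoeff0 (@mcoeff_sumX_inj _ _ _ (fun mu => mlast mu == k) (fun mu => g@_mu)
                  (mtrunc k) _ (msupp_uniq g) s_mu0 (introT eqP L_mu0)) //.
move=> mu s_mu /eqP L_mu e_trunc; apply: mtrunc_mlast_inj; rewrite ?L_mu ?L_mu0 //.
by rewrite (dhomog_mf g_homog s_mu) (dhomog_mf g_homog s_mu0).
Qed.

Lemma vanishing_proj_reduced_eq0 : g = 0.
Proof.
have coef0 k mu : mu \in msupp g -> mlast mu = k -> g@_mu = 0.
  elim/ltn_ind: k mu => k IH; apply: mcoeff_eq0_mlast => mu s_mu lt_k.
  exact: IH lt_k mu s_mu erefl.
by apply: mpoly_eq0_msupp => mu s_mu; apply: coef0 s_mu erefl.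
Qed.

End Vanishing.

End VanishingReducedForms.

Section ProjectivePoints.
Variables (F : finFieldType) (m : nat).
Local Notation n := m.+1.
Implicit Types (v w : 'rV[F]_n).

Lemma ev_homogZ (f : {mpoly F[n]}) d c v :
  f \is d.-homog -> ev f (c *: v) = c ^+ d * ev f v.
Proof.
move=> f_homog; rewrite /ev -(meval_homogZ c _ f_homog).
by apply: meval_eq => i; rewrite mxE.
Qed.

Lemma normalized_neq0 v : normalized v -> v != 0.
Proof.
move=> /existsP [k /andP [/eqP v_k _]]; apply: contra_eq_neq v_k => ->.
by rewrite mxE eq_sym oner_neq0.
Qed.

Lemma normalize_exists v : v != 0 -> exists2 c, c != 0 & normalized (c *: v).
Proof.
move=> v_neq0; have : (0 < #|[pred i : 'I_n | v 0%R i != 0%R]|)%N.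
  apply/card_gt0P/existsP; apply: contraNT v_neq0 => /existsPn v0.
  by apply/eqP/rowP => i; rewrite mxE; apply/eqP/negbNE/v0.
move=> /(eq_bigmax_cond (fun i : 'I_n => (i : nat))) [k v_k last_k].
exists (v 0 k)^-1; first by rewrite invr_eq0.
apply/existsP; exists k; rewrite mxE mulVf // eqxx /=.
apply/forallP => j; apply/implyP => lt_kj; rewrite mxE.
have [-> | v_j] := eqVneq (v 0 j) 0; first by rewrite mulr0.
have := leq_bigmax_cond (F := fun i : 'I_n => (i : nat))
                        (P := [pred i | v 0 i != 0]) j v_j.
by rewrite last_k leqNgt lt_kj.
Qed.

Lemma normalized_eq v w a : normalized v -> normalized w -> v = a *: w -> v = w.
Proof.
move=> /existsP [k /andP [/eqP v_k /forallP v_above]].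
move=> /existsP [l /andP [/eqP w_l /forallP w_above]] e_vw.
have e_kl : k = l.
  apply: val_inj; case: (ltngtP k l) => // [lt_kl | lt_lk].
  - move: (v_above l); rewrite lt_kl e_vw mxE w_l mulr1 => /eqP a0.
    by move: v_k; rewrite e_vw mxE a0 mul0r => /eqP; rewrite eq_sym oner_eq0.
  - move: (w_above k); rewrite lt_lk => /eqP w_k.
    by move: v_k; rewrite e_vw mxE w_k mulr0 => /eqP; rewrite eq_sym oner_eq0.
have a1 : a = 1 by move: v_k; rewrite e_vw mxE e_kl w_l mulr1.
by rewrite e_vw a1 scale1r.
Qed.

End ProjectivePoints.

Lemma classbP (Q : Prop) : reflect Q (classb Q).
Proof. by rewrite /classb; case: excluded_middle_informative => h; constructor. Qed.

Section GeneralizedHammingWeight.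
Variables (F : finFieldType) (n : nat) (C : 'rV[F]_n -> Prop) (r : nat).

Lemma ghw_le_supp (D : {vspace 'rV[F]_n}) :
  (forall x, x \in D -> C x) -> \dim D = r -> (ghw C r <= #|supp D|)%N.
Proof.
move=> DC dimD.
have lt_supp : (#|supp D| < n.+1)%N by rewrite ltnS -[X in (_ <= X)%N]card_ord max_card.
apply: (Order.TotalTheory.bigmin_le_cond n (fun k : 'I_n.+1 => k : nat)
          (j := Ordinal lt_supp)).
by apply/classbP; exists D.
Qed.

Lemma ghw_le_size : (ghw C r <= n)%N.
Proof. exact: (Order.TotalTheory.bigmin_le_id _ n _ (fun k : 'I_n.+1 => k : nat)). Qed.

Lemma ghw_ge b : (b <= n)%N ->
  (forall D : {vspace 'rV[F]_n},
     (forall x, x \in D -> C x) -> \dim D = r -> (b <= #|supp D|)%N) ->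
  (b <= ghw C r)%N.
Proof.
move=> b_le_n b_le.
apply: (Order.POrderTheory.le_bigmin _ (f := fun k : 'I_n.+1 => k : nat) b_le_n).
by move=> k /classbP [D [DC dimD <-]]; apply: b_le.
Qed.

Lemma supp_span k (X : k.-tuple 'rV[F]_n) (j : 'I_n) :
  (j \in supp <<X>>%VS) = [exists i : 'I_k, X`_i 0 j != 0].
Proof.
rewrite inE; apply/existsP/existsP => [[x /andP [x_span x_j]] | [i X_ij]].
  apply/existsP; apply: contraNT x_j => /existsPn X_j.
  rewrite (coord_span x_span) summxE big1 // => i _.
  by rewrite mxE (eqP (negbNE (X_j i))) mulr0.
by exists X`_i; rewrite X_ij andbT memv_span // mem_nth // size_tuple.
Qed.

End GeneralizedHammingWeight.

Section ProjectiveReedMuller.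
Variables (F : finFieldType) (m d : nat) (P : 'I_(pm F m) -> 'rV[F]_m.+1).
Hypotheses (P_reps : is_proj_reps P) (d_gt0 : (0 < d)%N).
Local Notation n := m.+1.
Local Notation N := (pm F m).
Local Notation poly := {mpoly F[n]}.

Definition codeword (f : poly) : 'rV[F]_N := \row_j ev f (P j).

Lemma codeword_sum k (c : 'I_k -> F) (G : 'I_k -> poly) :
  codeword (\sum_i c i *: G i) = \sum_i c i *: codeword (G i).
Proof.
apply/rowP => j; rewrite !mxE summxE /ev raddf_sum /=.
by apply: eq_bigr => i _; rewrite mevalZ !mxE.
Qed.

Lemma codeword_eq0 (f : poly) :
  f \is d.-homog -> proj_reduced f -> codeword f = 0 -> f = 0.
Proof.
move=> f_homog f_red cw0; apply: (vanishing_proj_reduced_eq0 d_gt0 f_homog f_red) => x.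
pose v : 'rV[F]_n := \row_i x i.
have -> : f.@[x] = ev f v by apply: meval_eq => i; rewrite mxE.
have [-> | v_neq0] := eqVneq v 0.
  by rewrite -(scale0r 0) (ev_homogZ _ _ f_homog) expr0n eqn0Ngt d_gt0 mul0r.
have [_ [/(_ v v_neq0) [j [c ->]] _]] := P_reps.
have := congr1 (fun w : 'rV_N => w 0 j) cw0; rewrite !mxE => ev_j.
by rewrite (ev_homogZ _ _ f_homog) ev_j mulr0.
Qed.

Definition common_zeros k (G : 'I_k -> poly) : {set 'I_N} :=
  [set j | [forall i, ev (G i) (P j) == 0]].

Lemma n_common_zerosE k (G : 'I_k -> poly) :
  (forall i, G i \is d.-homog) -> n_common_zeros G = #|common_zeros G|.
Proof.
move=> G_homog.
have zerosZ c w : c != 0 ->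
    [forall i, ev (G i) (c *: w) == 0] = [forall i, ev (G i) w == 0].
  move=> c_neq0; apply: eq_forallb => i.
  by rewrite (ev_homogZ _ _ (G_homog i)) mulf_eq0 expf_eq0 (negbTE c_neq0) andbF.
have [P_neq0 [P_span P_inj]] := P_reps.
have /fin_all_exists [c c_norm] j : exists c : F, (c != 0) && normalized (c *: P j).
  by have [c c_neq0 c_norm] := normalize_exists (P_neq0 j); exists c; rewrite c_neq0.
pose phi j := c j *: P j.
have phi_inj : injective phi.
  move=> i j e_ij; apply: (P_inj i j (c j / c i)).
  have /andP[ci_neq0 _] := c_norm i.
  by apply: (scalerI ci_neq0); rewrite scalerA mulrCA mulfV // mulr1.
rewrite /n_common_zeros -(card_imset _ phi_inj); apply: eq_card => v.
rewrite inE; apply/andP/imsetP => [[v_norm v0] | [j j0 ->]]; last first.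
  have /andP[cj_neq0 cj_norm] := c_norm j.
  by move: j0; rewrite inE cj_norm zerosZ.
have [j [a e_v]] := P_span v (normalized_neq0 v_norm).
have a_neq0 : a != 0.
  by apply: contraTneq (normalized_neq0 v_norm) => a0; rewrite e_v a0 scale0r eqxx.
exists j; first by rewrite inE -(zerosZ a) // -e_v.
have /andP[cj_neq0 cj_norm] := c_norm j.
by apply: (normalized_eq v_norm cj_norm (a := a / c j)); rewrite /phi scalerA mulfVK.
Qed.

Lemma card_supp_span k (G : 'I_k -> poly) (X : k.-tuple 'rV[F]_N) :
  (forall i, G i \is d.-homog) -> (forall i : 'I_k, X`_i = codeword (G i)) ->
  #|supp <<X>>%VS| = (N - n_common_zeros G)%N.
Proof.
move=> G_homog XG; rewrite n_common_zerosE //.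
have -> : common_zeros G = ~: supp <<X>>%VS.
  apply/setP => j; rewrite in_setC supp_span !inE negb_exists.
  by apply: eq_forallb => i; rewrite XG mxE negbK.
by have /(canRL (addnK _)) := cardsC (supp <<X>>%VS); rewrite card_ord.
Qed.

Lemma n_common_zeros_le_ebar r (G : 'I_r -> poly) :
  (forall i, G i \is d.-homog) -> (forall i, proj_reduced (G i)) -> lin_indep G ->
  (n_common_zeros G <= ebar F m d r)%N.
Proof.
move=> G_homog G_red G_indep.
have lt_zeros : (n_common_zeros G < N.+1)%N.
  by rewrite ltnS n_common_zerosE // -[X in (_ <= X)%N]card_ord max_card.
apply: (@leq_bigmax_cond _ _ (fun k : 'I_N.+1 => k : nat) (Ordinal lt_zeros)).
by apply/classbP; exists G.
Qed.

Lemma ebar_witness (r : nat) : (0 < ebar F m d r)%N ->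
  exists G : 'I_r -> poly,
    [/\ forall i, G i \is d.-homog, forall i, proj_reduced (G i), lin_indep G &
        n_common_zeros G = ebar F m d r].
Proof.
rewrite /ebar; set A := (X in \max_(k < _ | X k) _).
have [/card0_eq A0 | A_gt0] := posnP #|A|; first by rewrite big_pred0.
have [k A_k ->] := eq_bigmax_cond (fun k : 'I_N.+1 => k : nat) A_gt0.
by move: A_k => /classbP [G [G_homog G_red G_indep <-]]; exists G.
Qed.

Lemma reduced_family_subcode r (G : 'I_r -> poly) :
  (forall i, G i \is d.-homog) -> (forall i, proj_reduced (G i)) -> lin_indep G ->
  exists D : {vspace 'rV[F]_N},
    [/\ forall x, x \in D -> PRM P d x, \dim D = r &
        #|supp D| = (N - n_common_zeros G)%N].
Proof.
move=> G_homog G_red G_indep; pose X := [tuple codeword (G i) | i < r].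
have XG (i : 'I_r) : X`_i = codeword (G i) by rewrite -tnth_nth tnth_mktuple.
have homog_sum (c : 'I_r -> F) : \sum_i c i *: G i \is d.-homog.
  by apply: rpred_sum => i _; apply: rpredZ.
exists <<X>>%VS; split; last exact: card_supp_span.
  move=> x x_span; exists (\sum_i coord X i x *: G i); split => //.
  rewrite -[RHS]/(codeword _) codeword_sum {1}(coord_span x_span).
  by apply: eq_bigr => i _; rewrite XG.
suff /eqP : free X by rewrite size_tuple.
apply/freeP => c c0 i; apply: G_indep i.
apply: codeword_eq0 => //; first exact: proj_reduced_sum.
rewrite codeword_sum; apply: etrans c0.
by apply: eq_bigr => j _; rewrite XG.
Qed.

Lemma reduced_family_basis k (X : k.-tuple 'rV[F]_N) :
  free X -> (forall i : 'I_k, PRM P d X`_i) ->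
  exists G : 'I_k -> poly,
    [/\ forall i, G i \is d.-homog, forall i, proj_reduced (G i), lin_indep G &
        forall i : 'I_k, X`_i = codeword (G i)].
Proof.
move=> X_free X_code.
have /fin_all_exists [G G_spec] (i : 'I_k) : exists g : poly,
    [/\ g \is d.-homog, proj_reduced g & X`_i = codeword g].
  have [f [f_homog ->]] := X_code i; exists (mreduce f); split.
  - exact: mreduce_homog.
  - exact: mreduce_proj_reduced.
  - by apply/rowP => j; rewrite !mxE /ev meval_mreduce.
exists G; split=> [i | i | c c0 | i]; try by case: (G_spec i).
have : codeword (\sum_i c i *: G i) = 0.
  by rewrite c0; apply/rowP => j; rewrite !mxE /ev meval0.
rewrite codeword_sum => cw0; move/freeP: X_free; apply; apply: etrans cw0.
by apply: eq_bigr => i _; case: (G_spec i) => _ _ ->.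
Qed.

Lemma card_supp_subcode_ge (r : nat) (D : {vspace 'rV[F]_N}) :
  (forall x, x \in D -> PRM P d x) -> \dim D = r ->
  (N - ebar F m d r <= #|supp D|)%N.
Proof.
move=> DC <-; have /andP[/eqP span_basis basis_free] := vbasisP D.
have basis_code (i : 'I_(\dim D)) : PRM P d (vbasis D)`_i.
  by apply/DC/vbasis_mem/mem_nth; rewrite size_tuple.
have [G [G_homog G_red G_indep XG]] := reduced_family_basis basis_free basis_code.
have := card_supp_span G_homog XG; rewrite span_basis => ->.
by apply: leq_sub2l; apply: n_common_zeros_le_ebar.
Qed.

End ProjectiveReedMuller.


Theorem lemma6p2 (F : finFieldType) (m d r : nat)
    (P : 'I_(pm F m) -> 'rV[F]_m.+1) :
  (0 < m)%N -> is_proj_reps P ->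
  (1 <= d)%N -> (1 <= r)%N -> (r <= 'C(m + d, d) - rd F m d)%N ->
  ghw (PRM P d) r = (pm F m - ebar F m d r)%N.
Proof.
move=> _ P_reps d_gt0 _ _; apply/eqP; rewrite eqn_leq; apply/andP; split.
  have [-> | /ebar_witness [G [G_homog G_red G_indep <-]]] := posnP (ebar F m d r).
    by rewrite subn0 ghw_le_size.
  have [D [DC dimD <-]] := reduced_family_subcode P_reps d_gt0 G_homog G_red G_indep.
  exact: ghw_le_supp.
apply: ghw_ge => [|D DC dimD]; first exact: leq_subr.
exact: (card_supp_subcode_ge P_reps DC dimD).
Qed.
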